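(* Let $0<\sigma<2$ and let $p(\zeta)=(|\zeta|^2+|\zeta|^{2-\sigma})^{1/2}$ for $\zeta\in\mathbb{R}^3$. Let $a,b,c\in\mathbb{R}^3$ with $a=b+c$ and $|c|\le\min\{|a|,|b|\}$. If $|b|\ge1$, then \[ |p(a)-p(b)-p(c)|\gtrsim \frac{|c|}{1+(|a||c|)^\sigma}+|c|\big(1-\cos[a,c]+1-\cos[a,b]\big). \] Moreover, if $|c|<1$, then \[ |p(a)-p(b)-p(c)|\gtrsim\frac{|c|^{(2-\sigma)/2}}{(1+|b|^\sigma)^{1/2}} . \]
   Context: $[x,y]$ denotes the angle between vectors $x,y\in\mathbb{R}^3$. Implicit constants depend only on $\sigma$. *)

From Stdlib Require Import Reals.
Open Scope R_scope.

Definition vec3 : Type := (R * R * R)%type.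

Definition vadd (x y : vec3) : vec3 :=
  let '(x1, x2, x3) := x in let '(y1, y2, y3) := y in (x1 + y1, x2 + y2, x3 + y3).

Definition vdot (x y : vec3) : R :=
  let '(x1, x2, x3) := x in let '(y1, y2, y3) := y in x1 * y1 + x2 * y2 + x3 * y3.

Definition vnorm (x : vec3) : R := sqrt (vdot x x).

(* t^s for t >= 0 and s > 0, with the convention 0^s = 0
   (Stdlib's Rpower 0 s would be 1, since ln 0 = 0). *)
Definition rpow (t s : R) : R := if Req_EM_T t 0 then 0 else Rpower t s.

(* the angle [x,y] between x and y (acos of the normalized dot product;
   Stdlib's acos clamps its argument to [-1,1]). *)
Definition angle (x y : vec3) : R := acos (vdot x y / (vnorm x * vnorm y)).

Definition psym (sigma : R) (z : vec3) : R :=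
  sqrt (vnorm z ^ 2 + rpow (vnorm z) (2 - sigma)).

From Stdlib Require Import Reals Lra Psatz.
Open Scope R_scope.

(* Write t = |a|, r = |b|, s = |c| and F(x) = x sqrt(1 + x^-σ), so that p(ζ) = F(|ζ|).
   Since t <= r + s, F(r) + F(s) - F(t) splits into the subadditivity defect
   E = F(r) + F(s) - F(r + s) and F(r + s) - F(t) >= (r + s - t)/4 (as r + s >= 1).
   Because g(x) = sqrt(1 + x^-σ) decreases and (r + s)^-σ <= (2s)^-σ = 2^-σ s^-σ,
   E >= s (g(s) - g(r + s)) >= (1 - 2^-σ) s^(1-σ) / (2 g(s)), which yields both
   |c|/(1 + (|a||c|)^σ) and, for |c| < 1, |c|^((2-σ)/2) up to constants.  The angle
   terms are controlled by r + s - t through the law of cosines. *)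

Lemma Rdiv_le_of_le_mul x y z : 0 < y -> x <= z * y -> x / y <= z.
Proof.
  intros Hy Hx. apply (Rmult_le_reg_r y); [exact Hy|].
  unfold Rdiv. rewrite Rmult_assoc, Rinv_l by lra. lra.
Qed.

Lemma vdot_self_ge0 x : 0 <= vdot x x.
Proof. destruct x as [[x1 x2] x3]; simpl; nra. Qed.

Lemma vnorm_ge0 x : 0 <= vnorm x.
Proof. apply sqrt_pos. Qed.

Lemma vnorm_sqr x : vnorm x * vnorm x = vdot x x.
Proof. apply sqrt_sqrt, vdot_self_ge0. Qed.

Lemma vdot_Cauchy_Schwarz x y :
  - (vnorm x * vnorm y) <= vdot x y <= vnorm x * vnorm y.
Proof.
  assert (Lagrange : vdot x x * vdot y y - vdot x y * vdot x y >= 0).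
  { destruct x as [[x1 x2] x3], y as [[y1 y2] y3]; simpl.
    replace ((x1 * x1 + x2 * x2 + x3 * x3) * (y1 * y1 + y2 * y2 + y3 * y3)
             - (x1 * y1 + x2 * y2 + x3 * y3) * (x1 * y1 + x2 * y2 + x3 * y3))
      with ((x1 * y2 - x2 * y1) ^ 2 + (x1 * y3 - x3 * y1) ^ 2 + (x2 * y3 - x3 * y2) ^ 2)
      by ring.
    pose proof (pow2_ge_0 (x1 * y2 - x2 * y1)).
    pose proof (pow2_ge_0 (x1 * y3 - x3 * y1)).
    pose proof (pow2_ge_0 (x2 * y3 - x3 * y2)).
    lra. }
  rewrite <- !vnorm_sqr in Lagrange.
  assert (0 <= vnorm x * vnorm y) by (apply Rmult_le_pos; apply vnorm_ge0).
  split; nra.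
Qed.

Lemma cos_angle x y : 0 < vnorm x -> 0 < vnorm y ->
  cos (angle x y) = vdot x y / (vnorm x * vnorm y).
Proof.
  intros Hx Hy. unfold angle. apply cos_acos.
  pose proof (vdot_Cauchy_Schwarz x y).
  split.
  - apply (Rmult_le_reg_r (vnorm x * vnorm y)); [nra|].
    unfold Rdiv. rewrite Rmult_assoc, Rinv_l; nra.
  - apply Rdiv_le_of_le_mul; nra.
Qed.

Section Triangle.

Variables a b c : vec3.
Hypothesis abc : a = vadd b c.

Lemma vdot_sum_r :
  2 * vdot a c = vnorm a * vnorm a + vnorm c * vnorm c - vnorm b * vnorm b.
Proof.
  rewrite !vnorm_sqr, abc.
  destruct b as [[b1 b2] b3], c as [[c1 c2] c3]; simpl; ring.
Qed.

Lemma vdot_sum_l :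
  2 * vdot a b = vnorm a * vnorm a + vnorm b * vnorm b - vnorm c * vnorm c.
Proof.
  rewrite !vnorm_sqr, abc.
  destruct b as [[b1 b2] b3], c as [[c1 c2] c3]; simpl; ring.
Qed.

Lemma vnorm_sum_le : vnorm a <= vnorm b + vnorm c.
Proof.
  pose proof vdot_sum_r. pose proof (vdot_Cauchy_Schwarz a c).
  pose proof (vnorm_ge0 a). pose proof (vnorm_ge0 b). pose proof (vnorm_ge0 c).
  nra.
Qed.

Lemma vnorm_summand_le : vnorm b <= vnorm a + vnorm c.
Proof.
  pose proof vdot_sum_r. pose proof (vdot_Cauchy_Schwarz a c).
  pose proof (vnorm_ge0 a). pose proof (vnorm_ge0 b). pose proof (vnorm_ge0 c).
  nra.
Qed.

Lemma one_sub_cos_angle_sum_r :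
  0 < vnorm c <= vnorm a ->
  vnorm c * (1 - cos (angle a c)) <= vnorm b + vnorm c - vnorm a.
Proof.
  intros Hc. pose proof vdot_sum_r. pose proof vnorm_summand_le. pose proof vnorm_sum_le.
  rewrite cos_angle by lra.
  replace (vnorm c * (1 - vdot a c / (vnorm a * vnorm c)))
    with ((2 * (vnorm a * vnorm c) - 2 * vdot a c) / (2 * vnorm a)) by (field; lra).
  apply Rdiv_le_of_le_mul; nra.
Qed.

Lemma one_sub_cos_angle_sum_l :
  0 < vnorm c <= Rmin (vnorm a) (vnorm b) ->
  vnorm c * (1 - cos (angle a b)) <= vnorm b + vnorm c - vnorm a.
Proof.
  intros Hc. pose proof (Rmin_l (vnorm a) (vnorm b)). pose proof (Rmin_r (vnorm a) (vnorm b)).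
  pose proof vnorm_sum_le.
  rewrite cos_angle by lra.
  replace (vnorm c * (1 - vdot a b / (vnorm a * vnorm b)))
    with (vnorm c * (2 * (vnorm a * vnorm b) - 2 * vdot a b) / (2 * (vnorm a * vnorm b)))
    by (field; lra).
  rewrite vdot_sum_l.
  apply Rdiv_le_of_le_mul; [nra|].
  replace (vnorm c * (2 * (vnorm a * vnorm b) -
             (vnorm a * vnorm a + vnorm b * vnorm b - vnorm c * vnorm c)))
    with ((vnorm b + vnorm c - vnorm a) * (vnorm c * (vnorm c + vnorm a - vnorm b))) by ring.
  apply Rmult_le_compat_l; nra.
Qed.

End Triangle.

Lemma rpow_0_l y : rpow 0 y = 0.
Proof. unfold rpow. destruct (Req_EM_T 0 0); [reflexivity|lra]. Qed.

Lemma rpow_ge0 x y : 0 <= rpow x y.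
Proof. unfold rpow. destruct (Req_EM_T x 0); [lra|left; apply exp_pos]. Qed.

Lemma rpow_Rpower x y : 0 < x -> rpow x y = Rpower x y.
Proof. intros Hx. unfold rpow. destruct (Req_EM_T x 0); [lra|reflexivity]. Qed.

Lemma Rpower_1_l y : Rpower 1 y = 1.
Proof. unfold Rpower. rewrite ln_1, Rmult_0_r. apply exp_0. Qed.

Lemma Rle_Rpower_l_opp x y e : 0 <= e -> 0 < x <= y -> Rpower y (- e) <= Rpower x (- e).
Proof.
  intros He Hxy. rewrite !Rpower_Ropp.
  apply Rinv_le_contravar; [apply exp_pos|]. now apply Rle_Rpower_l.
Qed.

Definition prad (sigma x : R) : R := sqrt (x ^ 2 + rpow x (2 - sigma)).

Definition prad_defect (sigma r s : R) : R :=
  prad sigma r + prad sigma s - prad sigma (r + s).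

Lemma psym_prad sigma z : psym sigma z = prad sigma (vnorm z).
Proof. reflexivity. Qed.

Section Radial.

Variable sigma : R.
Hypothesis sigma_range : 0 < sigma < 2.

Local Notation q := (Rpower 2 (- sigma)).

Lemma Rpower_2_opp_bounds : 0 < q < 1.
Proof.
  split; [apply exp_pos|].
  rewrite <- (Rpower_O 2) by lra. apply Rpower_lt; lra.
Qed.

Lemma prad_factor x : 0 < x -> prad sigma x = x * sqrt (1 + Rpower x (- sigma)).
Proof.
  intros Hx. unfold prad. rewrite rpow_Rpower by exact Hx.
  replace (2 - sigma) with (INR 2 + - sigma) by (simpl; ring).
  rewrite Rpower_plus, Rpower_pow by exact Hx.
  replace (x ^ 2 + x ^ 2 * Rpower x (- sigma))
    with (x ^ 2 * (1 + Rpower x (- sigma))) by ring.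
  pose proof (exp_pos (- sigma * ln x)).
  rewrite sqrt_mult, sqrt_pow2; unfold Rpower in *; nra.
Qed.

Lemma prad_sqr x : 0 < x -> prad sigma x ^ 2 = x ^ 2 + Rpower x (2 - sigma).
Proof.
  intros Hx. unfold prad. rewrite rpow_Rpower by exact Hx.
  apply pow2_sqrt. pose proof (exp_pos ((2 - sigma) * ln x)). unfold Rpower. nra.
Qed.

Lemma prad_le_twice x : 1 <= x -> prad sigma x <= 2 * x.
Proof.
  intros Hx. rewrite prad_factor by lra.
  assert (Rpower x (- sigma) <= 1).
  { rewrite <- (Rpower_O x) by lra. apply Rle_Rpower; lra. }
  assert (sqrt (1 + Rpower x (- sigma)) <= 2).
  { rewrite <- (sqrt_pow2 2) by lra. apply sqrt_le_1_alt. lra. }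
  nra.
Qed.

Lemma prad_le x y : 0 < y <= x -> prad sigma y <= prad sigma x.
Proof.
  intros Hxy. apply sqrt_le_1_alt. rewrite !rpow_Rpower by lra.
  pose proof (Rle_Rpower_l y x (2 - sigma) ltac:(lra) Hxy). nra.
Qed.

Lemma prad_sub_ge x y : 1 <= x -> 0 < y <= x -> (x - y) / 4 <= prad sigma x - prad sigma y.
Proof.
  intros Hx Hy.
  pose proof (prad_le x y Hy). pose proof (prad_le_twice x Hx).
  pose proof (prad_sqr x ltac:(lra)). pose proof (prad_sqr y ltac:(lra)).
  pose proof (Rle_Rpower_l y x (2 - sigma) ltac:(lra) Hy).
  assert (0 <= prad sigma y) by apply sqrt_pos.
  assert ((prad sigma x - prad sigma y) * (prad sigma x + prad sigma y) >= (x - y) * x) by nra.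
  apply Rdiv_le_of_le_mul; nra.
Qed.

Lemma prad_defect_ge r s : 0 < s <= r ->
  (1 - q) * s * Rpower s (- sigma) <= 2 * prad_defect sigma r s * sqrt (1 + Rpower s (- sigma)).
Proof.
  intros Hs. unfold prad_defect. rewrite !prad_factor by lra.
  pose proof Rpower_2_opp_bounds.
  set (w x := Rpower x (- sigma)).
  change (Rpower r (- sigma)) with (w r) in *.
  change (Rpower s (- sigma)) with (w s) in *.
  change (Rpower (r + s) (- sigma)) with (w (r + s)) in *.
  assert (w_pos : forall x, 0 < w x) by (intros; apply exp_pos).
  assert (w_anti : forall x y, 0 < x <= y -> w y <= w x)
    by (intros; apply Rle_Rpower_l_opp; lra).
  assert (w_double : w (2 * s) = q * w s)
    by (unfold w; rewrite Rpower_mult_distr by lra; reflexivity).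
  set (g x := sqrt (1 + w x)).
  change (sqrt (1 + w ?x)) with (g x).
  assert (g_sqr : forall x, g x * g x = 1 + w x)
    by (intros; apply sqrt_sqrt; pose proof (w_pos x); lra).
  assert (g_ge0 : forall x, 0 <= g x) by (intros; apply sqrt_pos).
  assert (g_anti : forall x y, 0 < x <= y -> g y <= g x)
    by (intros x y Hxy; apply sqrt_le_1_alt; pose proof (w_anti x y Hxy); lra).
  pose proof (w_anti (2 * s) (r + s) ltac:(lra)).
  pose proof (g_anti r (r + s) ltac:(lra)). pose proof (g_anti s (r + s) ltac:(lra)).
  pose proof (g_sqr s). pose proof (g_sqr (r + s)). pose proof (g_ge0 s). pose proof (g_ge0 (r + s)).
  assert (g_drop : (g s - g (r + s)) * (2 * g s) >= (1 - q) * w s) by nra.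
  assert (r * g r + s * g s - (r + s) * g (r + s) >= s * (g s - g (r + s))) by nra.
  nra.
Qed.

Lemma prad_defect_pos r s : 0 < s <= r -> 0 < prad_defect sigma r s.
Proof.
  intros Hs. pose proof (prad_defect_ge r s Hs). pose proof Rpower_2_opp_bounds.
  assert (0 < (1 - q) * s * Rpower s (- sigma)) by (apply Rmult_lt_0_compat; [nra|apply exp_pos]).
  pose proof (sqrt_pos (1 + Rpower s (- sigma))). nra.
Qed.

Lemma prad_defect_ge_div_rpow r s t : 0 < s <= r -> 1 / 2 <= t ->
  (1 - q) * q * (s / (1 + rpow (t * s) sigma)) <= 2 * prad_defect sigma r s.
Proof.
  intros Hs Ht.
  pose proof (prad_defect_ge r s Hs) as HE. pose proof (prad_defect_pos r s Hs).
  pose proof Rpower_2_opp_bounds.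
  rewrite rpow_Rpower, <- Rpower_mult_distr by nra.
  set (w := Rpower s (- sigma)) in *. set (g := sqrt (1 + w)) in *.
  set (E := prad_defect sigma r s) in *.
  assert (w_pos : 0 < w) by apply exp_pos.
  assert (Hsw : Rpower s sigma * w = 1)
    by (unfold w; rewrite <- Rpower_plus, Rplus_opp_r; apply Rpower_O; lra).
  assert (Hqt : q <= Rpower t sigma).
  { assert (1 <= Rpower 2 sigma * Rpower t sigma).
    { rewrite Rpower_mult_distr, <- (Rpower_1_l sigma) by lra. apply Rle_Rpower_l; lra. }
    assert (q * Rpower 2 sigma = 1)
      by (rewrite Rpower_Ropp; field; apply Rgt_not_eq, exp_pos).
    nra. }
  assert (g_sqr : g * g = 1 + w) by (apply sqrt_sqrt; lra).
  assert (0 <= g) by apply sqrt_pos.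
  assert (1 <= g) by nra.
  assert (0 < Rpower t sigma * Rpower s sigma) by (apply Rmult_lt_0_compat; apply exp_pos).
  unfold Rdiv. rewrite <- Rmult_assoc. apply Rdiv_le_of_le_mul; [lra|].
  apply (Rmult_le_reg_r w); [exact w_pos|].
  assert (q * g <= (1 + Rpower t sigma * Rpower s sigma) * w) by nra.
  assert ((1 - q) * q * s * w <= 2 * E * (q * g)) by nra.
  nra.
Qed.

Lemma prad_defect_ge_rpow r s : 0 < s <= r -> s < 1 ->
  (1 - q) * rpow s ((2 - sigma) / 2) <= 4 * prad_defect sigma r s.
Proof.
  intros Hs Hs1.
  pose proof (prad_defect_ge r s Hs) as HE. pose proof (prad_defect_pos r s Hs).
  pose proof Rpower_2_opp_bounds.
  set (m := Rpower s (- sigma / 2)).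
  assert (m_pos : 0 < m) by apply exp_pos.
  assert (rpow_m : rpow s ((2 - sigma) / 2) = s * m).
  { rewrite rpow_Rpower by lra. replace ((2 - sigma) / 2) with (1 + - sigma / 2) by field.
    rewrite Rpower_plus, Rpower_1 by lra. reflexivity. }
  assert (m_sqr : Rpower s (- sigma) = m * m)
    by (unfold m; rewrite <- Rpower_plus; f_equal; field).
  assert (m_ge1 : 1 <= m * m).
  { rewrite <- m_sqr, <- (Rpower_1_l (- sigma)). apply Rle_Rpower_l_opp; lra. }
  rewrite m_sqr in HE. rewrite rpow_m.
  set (g := sqrt (1 + m * m)) in *. set (E := prad_defect sigma r s) in *.
  assert (g * g = 1 + m * m) by (apply sqrt_sqrt; nra).
  assert (0 <= g) by apply sqrt_pos.
  assert (g <= 2 * m) by nra.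
  apply (Rmult_le_reg_r m); [exact m_pos|].
  assert (2 * E * g <= 4 * E * m) by nra.
  nra.
Qed.

Section Vectors.

Variables a b c : vec3.
Hypothesis abc : a = vadd b c.
Hypothesis c_pos_min : 0 < vnorm c <= Rmin (vnorm a) (vnorm b).
Hypothesis b_ge1 : 1 <= vnorm b.

Lemma psym_defect_ge :
  prad_defect sigma (vnorm b) (vnorm c) + (vnorm b + vnorm c - vnorm a) / 4
  <= Rabs (psym sigma a - psym sigma b - psym sigma c).
Proof.
  rewrite !psym_prad.
  pose proof (vnorm_sum_le a b c abc). pose proof (Rmin_l (vnorm a) (vnorm b)).
  pose proof (prad_sub_ge (vnorm b + vnorm c) (vnorm a) ltac:(lra) ltac:(lra)).
  rewrite <- Rabs_Ropp. eapply Rle_trans; [|apply Rle_abs]. unfold prad_defect. lra.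
Qed.

Lemma psym_defect_ge_angle_terms :
  (1 - q) * q / 16 *
    (vnorm c / (1 + rpow (vnorm a * vnorm c) sigma)
     + vnorm c * ((1 - cos (angle a c)) + (1 - cos (angle a b))))
  <= Rabs (psym sigma a - psym sigma b - psym sigma c).
Proof.
  pose proof Rpower_2_opp_bounds.
  pose proof (Rmin_l (vnorm a) (vnorm b)). pose proof (Rmin_r (vnorm a) (vnorm b)).
  pose proof (vnorm_summand_le a b c abc).
  pose proof (prad_defect_ge_div_rpow (vnorm b) (vnorm c) (vnorm a) ltac:(lra) ltac:(lra)).
  pose proof (prad_defect_pos (vnorm b) (vnorm c) ltac:(lra)).
  pose proof (one_sub_cos_angle_sum_r a b c abc ltac:(lra)).
  pose proof (one_sub_cos_angle_sum_l a b c abc c_pos_min).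
  pose proof psym_defect_ge.
  pose proof (vnorm_sum_le a b c abc).
  set (delta := vnorm b + vnorm c - vnorm a) in *.
  assert (0 <= delta) by (unfold delta; lra).
  assert ((1 - q) * q / 16 * (vnorm c * (1 - cos (angle a c))) <= (1 - q) * q / 16 * delta)
    by (apply Rmult_le_compat_l; nra).
  assert ((1 - q) * q / 16 * (vnorm c * (1 - cos (angle a b))) <= (1 - q) * q / 16 * delta)
    by (apply Rmult_le_compat_l; nra).
  assert ((1 - q) * q / 16 * delta <= delta / 16) by nra.
  lra.
Qed.

Lemma psym_defect_ge_rpow :
  vnorm c < 1 ->
  (1 - q) * q / 16 * (rpow (vnorm c) ((2 - sigma) / 2) / sqrt (1 + rpow (vnorm b) sigma))
  <= Rabs (psym sigma a - psym sigma b - psym sigma c).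
Proof.
  intros c_lt1.
  pose proof Rpower_2_opp_bounds. pose proof (Rmin_r (vnorm a) (vnorm b)).
  pose proof (prad_defect_ge_rpow (vnorm b) (vnorm c) ltac:(lra) c_lt1).
  pose proof psym_defect_ge. pose proof (vnorm_sum_le a b c abc).
  pose proof (rpow_ge0 (vnorm c) ((2 - sigma) / 2)).
  set (Y := rpow (vnorm c) ((2 - sigma) / 2)) in *.
  assert (den_ge1 : 1 <= sqrt (1 + rpow (vnorm b) sigma)).
  { rewrite <- sqrt_1 at 1. apply sqrt_le_1_alt. pose proof (rpow_ge0 (vnorm b) sigma). lra. }
  assert (Y / sqrt (1 + rpow (vnorm b) sigma) <= Y) by (apply Rdiv_le_of_le_mul; nra).
  assert ((1 - q) * q / 16 * (Y / sqrt (1 + rpow (vnorm b) sigma)) <= (1 - q) * q / 16 * Y)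
    by (apply Rmult_le_compat_l; nra).
  assert (0 <= (1 - q) * Y) by (apply Rmult_le_pos; lra).
  assert ((1 - q) * q / 16 * Y <= (1 - q) * Y / 4) by nra.
  lra.
Qed.

End Vectors.

End Radial.

Theorem lemma4p1 :
  forall sigma : R, 0 < sigma < 2 ->
  exists C : R, 0 < C /\
  forall a b c : vec3,
    a = vadd b c ->
    vnorm c <= Rmin (vnorm a) (vnorm b) ->
    1 <= vnorm b ->
    (C * (vnorm c / (1 + rpow (vnorm a * vnorm c) sigma)
          + vnorm c * ((1 - cos (angle a c)) + (1 - cos (angle a b))))
       <= Rabs (psym sigma a - psym sigma b - psym sigma c))
    /\
    (vnorm c < 1 ->
     C * (rpow (vnorm c) ((2 - sigma) / 2) / sqrt (1 + rpow (vnorm b) sigma))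
       <= Rabs (psym sigma a - psym sigma b - psym sigma c)).
Proof.
  intros sigma Hsigma.
  pose proof (Rpower_2_opp_bounds sigma Hsigma).
  exists ((1 - Rpower 2 (- sigma)) * Rpower 2 (- sigma) / 16). split; [nra|].
  intros a b c abc Hc Hb.
  destruct (Req_dec (vnorm c) 0) as [c0 | c0].
  - pose proof (Rabs_pos (psym sigma a - psym sigma b - psym sigma c)).
    rewrite c0, rpow_0_l. split; [|intros _]; lra.
  - assert (Hc' : 0 < vnorm c <= Rmin (vnorm a) (vnorm b))
      by (pose proof (vnorm_ge0 c); lra).
    split.
    + exact (psym_defect_ge_angle_terms sigma Hsigma a b c abc Hc' Hb).
    + exact (psym_defect_ge_rpow sigma Hsigma a b c abc Hc' Hb).
Qed.
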